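(* Let $(\mathcal S,\mathcal A,H,\mathbb P,\mu)$ be a finite episodic MDP, $\pi^+$ a deterministic target policy and $\epsilon>0$. Define manipulated mean rewards $\tilde\mu_h(s,a)=\mu(s,a)$ if $a=\pi^+_h(s)$, and $\tilde\mu_h(s,a)=Q^{\pi^+}_h(s,\pi^+_h(s))-\mathbb E_{s'\sim\mathbb P(\cdot\mid s,a)}[V^{\pi^+}_{h+1}(s')]-\epsilon$ otherwise, and let $\tilde Q^\pi_h,\tilde V^\pi_h$ be Q-values and values of deterministic policies in the MDP with transitions $\mathbb P$ and step-$h$ mean rewards $\tilde\mu_h$ (with $\tilde V_{H+1}\equiv 0$). Then for every $h\le H$, $s\in\mathcal S$, $a\ne\pi^+_h(s)$ and every deterministic policy $\pi$, $$\tilde Q^{\pi}_h(s,a)\le\tilde Q^{\pi^+}_h(s,\pi^+_h(s))-\epsilon,$$ and $\tilde V^\pi_h(s)\le\tilde V^{\pi^+}_h(s)$ for all $h,s,\pi$, with strict inequality whenever $\pi_h(s)\ne\pi^+_h(s)$.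
   Context: $V^\pi_h(s)=\mathbb E[\sum_{h'=h}^H\mu(s_{h'},\pi_{h'}(s_{h'}))\mid s_h=s]$ and $Q^\pi_h(s,a)=\mu(s,a)+\mathbb E_{s'\sim\mathbb P(\cdot|s,a)}[V^\pi_{h+1}(s')]$ are the true values, with $V^\pi_{H+1}\equiv0$; $\tilde Q^\pi_h(s,a)=\tilde\mu_h(s,a)+\mathbb E_{s'\sim\mathbb P(\cdot|s,a)}[\tilde V^\pi_{h+1}(s')]$, $\tilde V^\pi_h(s)=\tilde Q^\pi_h(s,\pi_h(s))$. *)

From HB Require Import structures.
From mathcomp Require Import all_boot all_order all_algebra.
Set Implicit Arguments. Unset Strict Implicit. Unset Printing Implicit Defensive.
Import Order.TTheory GRing.Theory Num.Theory.
Local Open Scope ring_scope.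

Section MDP.
Variables (R : realFieldType) (S A : finType).

(* transition kernel P s a s' = P(s' | s, a) *)
Definition is_kernel (P : S -> A -> S -> R) : Prop :=
  forall s a, (forall s', 0 <= P s a s') /\ \sum_(s' : S) P s a s' = 1.

(* deterministic (non-stationary) policy: pi h s is the action at step h *)
Definition policy := nat -> S -> A.

(* value with n remaining steps, starting at step h, step-dependent reward rew h s a *)
Fixpoint Vn (P : S -> A -> S -> R) (rew : nat -> S -> A -> R) (pi : policy)
  (n h : nat) (s : S) : R :=
  match n with
  | 0 => 0
  | n'.+1 => rew h s (pi h s) + \sum_(s' : S) P s (pi h s) s' * Vn P rew pi n' h.+1 s'
  end.

(* V^pi_h(s) for horizon H: H+1-h steps remain; V_{H+1} = 0 *)
Definition Vval (H : nat) P rew pi (h : nat) (s : S) : R := Vn P rew pi (H.+1 - h) h s.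

Definition Qval (H : nat) P rew pi (h : nat) (s : S) (a : A) : R :=
  rew h s a + \sum_(s' : S) P s a s' * Vval H P rew pi h.+1 s'.

Definition stat_rew (mu : S -> A -> R) : nat -> S -> A -> R := fun _ s a => mu s a.

Definition manip_rew (H : nat) P (mu : S -> A -> R) (pip : policy) (eps : R)
  : nat -> S -> A -> R :=
  fun h s a =>
    if a == pip h s then mu s a
    else Qval H P (stat_rew mu) pip h s (pip h s)
         - \sum_(s' : S) P s a s' * Vval H P (stat_rew mu) pip h.+1 s' - eps.

End MDP.

(* The manipulated reward of a non-target action a is chosen so that playing a once and then
   following pi+ yields exactly Q^{pi+}_h(s, pi+_h(s)) - eps, while pi+ itself only collects the
   true rewards, so its manipulated and true values coincide.  Backward induction on h then shows
   that pi+ dominates every policy: deviating at step h costs eps immediately and, by the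
   induction hypothesis, continuing with pi instead of pi+ afterwards cannot help. *)
From HB Require Import structures.
From mathcomp Require Import all_boot all_order all_algebra.
From mathcomp Require Import zify.
Set Implicit Arguments. Unset Strict Implicit. Unset Printing Implicit Defensive.
Import Order.TTheory GRing.Theory Num.Theory.
Local Open Scope ring_scope.

Section Values.
Variables (R : realFieldType) (S A : finType) (H : nat) (P : S -> A -> S -> R).

Lemma Vval_Qval rew (pi : policy S A) h s :
  (h <= H)%N -> Vval H P rew pi h s = Qval H P rew pi h s (pi h s).
Proof. by move=> le_hH; rewrite /Vval /Qval subSn //= subSS. Qed.

Lemma Vval_out rew (pi : policy S A) h s : (H < h)%N -> Vval H P rew pi h s = 0.
Proof. by move=> lt_Hh; rewrite /Vval (eqP lt_Hh). Qed.

Lemma expectation_le (f g : S -> R) s a :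
  (forall s', 0 <= P s a s') -> (forall s', f s' <= g s') ->
  \sum_s' P s a s' * f s' <= \sum_s' P s a s' * g s'.
Proof. by move=> P_ge0 le_fg; apply: ler_sum => s' _; apply: ler_wpM2l. Qed.

End Values.

Section Manipulation.
Variables (R : realFieldType) (S A : finType) (H : nat).
Variables (P : S -> A -> S -> R) (mu : S -> A -> R) (pip : policy S A) (eps : R).
Hypothesis P_ge0 : forall s a s', 0 <= P s a s'.

Local Notation mut := (manip_rew H P mu pip eps).

Lemma Vn_manip_target n h s : Vn P mut pip n h s = Vn P (stat_rew mu) pip n h s.
Proof.
elim: n h s => [|n IH] h s //=.
by rewrite /manip_rew eqxx; congr (_ + _); apply: eq_bigr => s' _; rewrite IH.
Qed.

Lemma Vval_manip_target h s : Vval H P mut pip h s = Vval H P (stat_rew mu) pip h s.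
Proof. exact: Vn_manip_target. Qed.

Lemma Qval_manip_target h s :
  Qval H P mut pip h s (pip h s) = Qval H P (stat_rew mu) pip h s (pip h s).
Proof.
rewrite /Qval /manip_rew eqxx; congr (_ + _).
by apply: eq_bigr => s' _; rewrite Vval_manip_target.
Qed.

Lemma manip_rew_gap h s a : a != pip h s ->
  mut h s a + \sum_s' P s a s' * Vval H P mut pip h.+1 s'
  = Qval H P mut pip h s (pip h s) - eps.
Proof.
move=> a_ne; rewrite Qval_manip_target.
under eq_bigr => s' _ do rewrite Vval_manip_target.
by rewrite [mut h s a]/manip_rew (negbTE a_ne) addrAC subrK.
Qed.

Lemma Qval_le_gap (pi : policy S A) h s a :
  (forall s', Vval H P mut pi h.+1 s' <= Vval H P mut pip h.+1 s') -> a != pip h s ->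
  Qval H P mut pi h s a <= Qval H P mut pip h s (pip h s) - eps.
Proof.
move=> le_next a_ne; rewrite -(manip_rew_gap a_ne) /Qval lerD2l.
exact: expectation_le.
Qed.

Lemma Vval_le_target (eps_ge0 : 0 <= eps) (pi : policy S A) h s :
  Vval H P mut pi h s <= Vval H P mut pip h s.
Proof.
move: (leqnn (H.+1 - h)); move: {2}(H.+1 - h)%N => k.
elim: k h s => [|k IH] h s le_k; first by rewrite !Vval_out //; lia.
have [le_hH | lt_Hh] := leqP h H; last by rewrite !Vval_out.
have le_next s' : Vval H P mut pi h.+1 s' <= Vval H P mut pip h.+1 s'.
  by apply: IH; lia.
rewrite !Vval_Qval //; have [-> | pi_ne] := eqVneq (pi h s) (pip h s).
  by rewrite /Qval lerD2l; apply: expectation_le.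
by apply: le_trans (Qval_le_gap le_next pi_ne) _; rewrite gerBl.
Qed.

Lemma Vval_lt_target (eps_gt0 : 0 < eps) (pi : policy S A) h s :
  (h <= H)%N -> pi h s != pip h s -> Vval H P mut pi h s < Vval H P mut pip h s.
Proof.
move=> le_hH pi_ne; rewrite !Vval_Qval //.
apply: le_lt_trans (Qval_le_gap _ pi_ne) _; last by rewrite ltrBlDr ltrDl.
by move=> s'; apply: Vval_le_target (ltW eps_gt0) _ _ _.
Qed.

End Manipulation.

Theorem mainTheorem6 (R : realFieldType) (S A : finType) (H : nat)
  (P : S -> A -> S -> R) (mu : S -> A -> R) (pip : policy S A) (eps : R) :
  is_kernel P -> 0 < eps ->
  let mut := manip_rew H P mu pip eps in
  (forall (pi : policy S A) (h : nat) (s : S) (a : A),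
      (1 <= h <= H)%N -> a != pip h s ->
      Qval H P mut pi h s a <= Qval H P mut pip h s (pip h s) - eps)
  /\
  (forall (pi : policy S A) (h : nat) (s : S),
      (1 <= h <= H)%N ->
      Vval H P mut pi h s <= Vval H P mut pip h s
      /\ (pi h s != pip h s -> Vval H P mut pi h s < Vval H P mut pip h s)).
Proof.
move=> kernel eps_gt0 mut; rewrite {}/mut.
have P_ge0 s a s' : 0 <= P s a s' by case: (kernel s a).
have eps_ge0 := ltW eps_gt0.
split=> [pi h s a _ a_ne | pi h s /andP[_ le_hH]].
  by apply: (Qval_le_gap P_ge0) a_ne => s'; apply: Vval_le_target P_ge0 eps_ge0 _ _ _.
split; first exact: Vval_le_target P_ge0 eps_ge0 _ _ _.
exact: Vval_lt_target.
Qed.
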